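(* Let $L\in\mathbb{Z}_{>0}$ and let $\mathcal{Z}(\lambda_1,\dots,\lambda_L)=\langle\bar 0|\mathcal{B}(\lambda_1)\cdots\mathcal{B}(\lambda_L)|0\rangle$ be the partition function of the six-vertex model with one reflecting end and domain-wall boundaries (see context). Then, writing $x_i=e^{2\lambda_i}$, one has $\mathcal{Z}(\lambda_1,\dots,\lambda_L)=\bar{\mathcal{Z}}(x_1,\dots,x_L)\prod_{i=1}^{L}x_i^{-L}$, where $\bar{\mathcal{Z}}(x_1,\dots,x_L)$ is a polynomial of degree $2L$ in each of its variables $x_i$.
   Context: Parameters $\gamma,h,\mu_1,\dots,\mu_L\in\mathbb{C}$. Set $a(\lambda)=\sinh(\lambda+\gamma)$, $b(\lambda)=\sinh(\lambda)$, $c(\lambda)=\sinh(\gamma)$. The $R$-matrix $\mathcal{R}(\lambda)\in\mathrm{End}(\mathbb{C}^2\otimes\mathbb{C}^2)$ is, in the basis $e_1\otimes e_1,e_1\otimes e_2,e_2\otimes e_1,e_2\otimes e_2$, the matrix with rows $(a,0,0,0)$, $(0,b,c,0)$, $(0,c,b,0)$, $(0,0,0,a)$ evaluated at $\lambda$. Let $\mathbb{V}_0\cong\mathbb{C}^2$ and $\mathbb{V}_{\mathcal{Q}}=(\mathbb{C}^2)^{\otimes L}$; $\mathcal{R}_{0j}$ acts on $\mathbb{V}_0$ and the $j$-th factor of $\mathbb{V}_{\mathcal{Q}}$. Define $\tau(\lambda)=\mathcal{R}_{0L}(\lambda-\mu_L)\cdots\mathcal{R}_{01}(\lambda-\mu_1)$,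 $\bar\tau(\lambda)=\mathcal{R}_{01}(\lambda+\mu_1)\cdots\mathcal{R}_{0L}(\lambda+\mu_L)$, $\mathcal{K}(\lambda)=\mathrm{diag}(\sinh(h+\lambda),\sinh(h-\lambda))$ on $\mathbb{V}_0$, and $\mathcal{T}(\lambda)=\tau(\lambda)\mathcal{K}(\lambda)\bar\tau(\lambda)=\begin{pmatrix}\mathcal{A}(\lambda)&\mathcal{B}(\lambda)\\ \mathcal{C}(\lambda)&\mathcal{D}(\lambda)\end{pmatrix}$ in $\mathbb{V}_0$, with entries in $\mathrm{End}(\mathbb{V}_{\mathcal{Q}})$. Let $|0\rangle=e_1^{\otimes L}$ and $\langle\bar 0|$ the transpose of $e_2^{\otimes L}$, $e_1=(1,0)^T$, $e_2=(0,1)^T$. *)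

From HB Require Import structures.
From mathcomp Require Import all_boot all_order all_algebra.
From mathcomp Require Import all_classical all_reals all_analysis.
From mathcomp Require Import complex.
Set Implicit Arguments. Unset Strict Implicit. Unset Printing Implicit Defensive.
Import Order.TTheory GRing.Theory Num.Theory.
Local Open Scope ring_scope.

Section SixVertex.
Variable R : realType.
Local Notation C := R[i].

Definition cexp (z : C) : C :=
  let: Complex a b := z in Complex (expR a * cos b) (expR a * sin b).

Definition csinh (z : C) : C := (cexp z - cexp (- z)) / 2%:R.

(* Basis of V_0 ⊗ V_Q : (auxiliary index, quantum configuration);
   index 0 <-> e_1, index 1 <-> e_2. *)
Definition qidx (L : nat) := {ffun 'I_L -> 'I_2}.
Definition fidx (L : nat) := ('I_2 * qidx L)%type.

Definition fop L := fidx L -> fidx L -> C.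
Definition qop L := qidx L -> qidx L -> C.

Definition fmul L (A B : fop L) : fop L := fun x z => \sum_(y : fidx L) A x y * B y z.
Definition fone L : fop L := fun x z => (x == z)%:R.
Definition qmul L (A B : qop L) : qop L := fun x z => \sum_(y : qidx L) A x y * B y z.
Definition qone L : qop L := fun x z => (x == z)%:R.

(* R-matrix entry  R(lam)_{(i',j'),(i,j)}  in basis e_i ⊗ e_j *)
Definition Rent (gam lam : C) (i' j' i j : 'I_2) : C :=
  if (i' == i) && (j' == j) then
    (if i == j then csinh (lam + gam) else csinh lam)
  else if [&& i' == j, j' == i & i != j] then csinh gam else 0.

Definition Rop L (gam : C) (j : 'I_L) (lam : C) : fop L :=
  fun x y => Rent gam lam x.1 (x.2 j) y.1 (y.2 j) *
             ([forall k, (k != j) ==> (x.2 k == y.2 k)])%:R.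

Definition Kop L (h lam : C) : fop L :=
  fun x y => ((x == y)%:R) * (if x.1 == 0 then csinh (h + lam) else csinh (h - lam)).

(* tau(lam) = R_{0L}(lam-mu_L) ... R_{01}(lam-mu_1) *)
Definition tau L gam (mu : 'I_L -> C) lam : fop L :=
  \big[@fmul L/@fone L]_(j < L) Rop gam (rev_ord j) (lam - mu (rev_ord j)).
Definition taubar L gam (mu : 'I_L -> C) lam : fop L :=
  \big[@fmul L/@fone L]_(j < L) Rop gam j (lam + mu j).

Definition monodromy L gam h mu lam : fop L :=
  fmul (fmul (tau gam mu lam) (@Kop L h lam)) (taubar gam mu lam).

(* B(lam): the (1,2) entry of T(lam) in V_0, an operator on V_Q *)
Definition Bop L gam h mu lam : qop L :=
  fun s' s => monodromy gam h mu lam (0, s') (1, s).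

Definition ket0 L : qidx L := [ffun => 0].
Definition ketbar0 L : qidx L := [ffun => 1].

Definition Zpart L gam h (mu : 'I_L -> C) (lam : 'I_L -> C) : C :=
  (\big[@qmul L/@qone L]_(i < L) Bop gam h mu (lam i)) (ketbar0 L) (ket0 L).

End SixVertex.

(* Write [x = e^(2 lam)].  Every factor of the monodromy matrix is, as a
   function of [lam], either [sinh (+-lam + const)] (exponents [+-1] in [e^lam])
   or the constant [sinh gam], which sits exactly on the entries that flip the
   auxiliary spin.  Hence an entry of [B(lam)], a sum of products of [2L + 1]
   such factors with an odd number of flips, is [x^-L] times a polynomial of
   degree [2L] in [x].  In [<0bar| B(lam_1) ... B(lam_L) |0>] each variable
   occurs in a single factor, so multilinear expansion gives the claim. *)

From HB Require Import structures.
From mathcomp Require Import all_boot all_order all_algebra.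
From mathcomp Require Import all_classical all_reals all_analysis.
From mathcomp Require Import complex.
From mathcomp Require Import ring zify.
Set Implicit Arguments. Unset Strict Implicit. Unset Printing Implicit Defensive.
Import Order.TTheory GRing.Theory Num.Theory.
Local Open Scope ring_scope.

Section ComplexExp.
Variable R : realType.
Implicit Types z w : R[i].

Lemma cexpD z w : cexp (z + w) = cexp z * cexp w.
Proof.
case: z w => [a b] [c d]; rewrite /cexp /= expRD cosD sinD.
by apply/eqP; rewrite eq_complex /=; apply/andP; split; apply/eqP; ring.
Qed.

Lemma cexp0 : cexp (0 : R[i]) = 1.
Proof. by rewrite /cexp /= expR0 cos0 sin0 mulr1 mulr0. Qed.

Lemma cexp_neq0 z : cexp z != 0.
Proof.
apply/negP => /eqP z0; have := cexpD z (- z).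
by rewrite subrr cexp0 z0 mul0r => /eqP; rewrite oner_eq0.
Qed.

Lemma cexpN z : cexp (- z) = (cexp z)^-1.
Proof. by apply: (mulfI (cexp_neq0 z)); rewrite -cexpD subrr cexp0 divff ?cexp_neq0. Qed.

Lemma cexpMn z n : cexp (z *+ n) = cexp z ^+ n.
Proof. by elim: n => [|n IH]; rewrite ?cexp0 // mulrS exprS cexpD IH. Qed.

Lemma cexpX_neq0 z n : cexp z ^+ n != 0.
Proof. by rewrite expf_neq0 ?cexp_neq0. Qed.

End ComplexExp.

Section Laurent.
Variable R : realType.
Local Notation C := R[i].
Implicit Types (f g : C -> C) (b : bool).

(* [f] is a Laurent polynomial in [e^z] whose exponents lie in [-n, n] and
   are congruent to [n + b] modulo 2. *)
Definition laurent (n : nat) b f :=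
  exists2 p : {poly C}, (size p <= n.+1 - b)%N &
    forall z, f z = p.[cexp z ^+ 2] * cexp z ^+ b / cexp z ^+ n.

Lemma eq_laurent n b f g : f =1 g -> laurent n b f -> laurent n b g.
Proof. by move=> fg [p sp fE]; exists p => // z; rewrite -fg. Qed.

Lemma laurent0 n b : laurent n b (fun=> 0).
Proof. by exists 0 => [|z]; rewrite ?size_poly0 ?horner0 ?mul0r. Qed.

Lemma laurent_const (c : C) : laurent 0 false (fun=> c).
Proof.
by exists c%:P => [|z]; rewrite ?size_polyC ?leq_b1 // hornerC expr0 divr1 mulr1.
Qed.

Lemma laurentS n b f : laurent n b f -> laurent n.+1 (~~ b) f.
Proof.
case=> p sp fE; exists (p * 'X ^+ b) => [|z].
  have := size_polyMleq p ('X ^+ b).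
  by rewrite size_polyXn; case: b sp {fE} => /=; lia.
rewrite fE hornerM hornerXn [_ ^+ n.+1]exprS; clear; case: b => /=;
  by field; rewrite ?cexpX_neq0 ?cexp_neq0.
Qed.

Lemma laurentM n m b b' f g : laurent n b f -> laurent m b' g ->
  laurent (n + m) (b (+) b') (fun z => f z * g z).
Proof.
case=> p sp fE [q sq gE]; exists (p * q * 'X ^+ (b && b')) => [|z].
  have := size_polyMleq p q; have := size_polyMleq (p * q) ('X ^+ (b && b')).
  by rewrite size_polyXn; case: b b' sp sq {fE gE} => [] [] /=; lia.
by rewrite fE gE !hornerM hornerXn exprD; clear; case: b b' => [] [] /=; field;
  rewrite ?cexpX_neq0.
Qed.

Lemma laurent_sum n b (I : finType) (F : I -> C -> C) :
  (forall i, laurent n b (F i)) -> laurent n b (fun z => \sum_i F i z).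
Proof.
move=> /fin_all_exists2[p sp FE]; exists (\sum_i p i) => [|z].
  by apply: (big_ind (fun q : {poly C} => size q <= _)%N) => // [|q r];
    rewrite ?size_poly0 // => sq sr;
    by apply: leq_trans (size_polyD q r) _; rewrite geq_max sq.
by rewrite horner_sum !big_distrl; apply: eq_bigr => i _; rewrite FE.
Qed.

Lemma laurent_csinhD (a : C) : laurent 1 false (fun z => csinh (z + a)).
Proof.
exists ((cexp a / 2%:R) *: 'X - (cexp (- a) / 2%:R)%:P) => [|z].
  apply: leq_trans (size_polyD _ _) _; rewrite geq_max size_polyN.
  rewrite (leq_trans (size_polyC_leq1 _)) //.
  by rewrite (leq_trans (size_scale_leq _ _)) ?size_polyX.
rewrite /csinh !cexpN !cexpD hornerD hornerN hornerZ hornerX hornerC.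
by field; rewrite !cexp_neq0.
Qed.

Lemma laurent_csinhB (a : C) : laurent 1 false (fun z => csinh (a - z)).
Proof.
exists ((cexp a / 2%:R)%:P - (cexp (- a) / 2%:R) *: 'X) => [|z].
  apply: leq_trans (size_polyD _ _) _; rewrite geq_max size_polyN.
  rewrite (leq_trans (size_polyC_leq1 _)) //.
  by rewrite (leq_trans (size_scale_leq _ _)) ?size_polyX.
rewrite /csinh opprB !cexpD !cexpN hornerD hornerN hornerZ hornerX hornerC.
by field; rewrite !cexp_neq0.
Qed.

End Laurent.

Lemma neq_I2_addb (a b c : 'I_2) : (a != b) (+) (b != c) = (a != c).
Proof. by case: a b c => [[|[|?]] ?] [[|[|?]] ?] [[|[|?]] ?]. Qed.

Section LaurentOperators.
Variables (R : realType) (L : nat).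
Local Notation C := R[i].
Implicit Types (n : nat) (M : C -> fop R L).

(* Entries flipping the auxiliary spin are the odd ones. *)
Definition laurent_op n M :=
  forall x y : fidx L, laurent n (x.1 != y.1) (fun z => M z x y).

Lemma eq_laurent_op n M N :
  (forall z, M z =2 N z) -> laurent_op n M -> laurent_op n N.
Proof. by move=> MN HM x y; apply: eq_laurent (HM x y) => z; apply: MN. Qed.

Lemma laurent_op_one : laurent_op 0 (fun=> @fone R L).
Proof.
move=> x y; rewrite /fone; case: (eqVneq x y) => [<-|_]; last exact: laurent0.
by rewrite eqxx; exact: laurent_const.
Qed.

Lemma laurent_opM n m M N : laurent_op n M -> laurent_op m N ->
  laurent_op (n + m) (fun z => fmul (M z) (N z)).
Proof.
move=> HM HN x y; apply: laurent_sum => w.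
by rewrite -(neq_I2_addb _ w.1); apply: laurentM.
Qed.

Lemma laurent_op_prod n (F : 'I_n -> C -> fop R L) :
  (forall j, laurent_op 1 (F j)) ->
  laurent_op n (fun z => \big[@fmul R L/@fone R L]_(j < n) F j z).
Proof.
elim: n F => [|n IH] F HF.
  by apply: eq_laurent_op laurent_op_one => z x y; rewrite big_ord0.
apply: eq_laurent_op (laurent_opM (HF ord0) (IH _ (fun j => HF (lift ord0 j)))).
by move=> z x y; rewrite big_ord_recl.
Qed.

Lemma laurent_Rent (gam s : C) (a a' c c' : 'I_2) :
  laurent 1 (a != c) (fun z => Rent gam (z + s) a a' c c').
Proof.
rewrite /Rent; case: (eqVneq a c) => [<-|_].
  case: (eqVneq a' c') => [<-|a'c'] /=.
    case: (a == a'); last exact: laurent_csinhD.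
    by apply: eq_laurent (laurent_csinhD (s + gam)) => z; rewrite addrA.
  case: and3P => [[/eqP ac' /eqP a'a _]|_]; last exact: laurent0.
  by rewrite a'a ac' eqxx in a'c'.
case: [&& _, _ & _]; last exact: laurent0.
exact/laurentS/laurent_const.
Qed.

Lemma laurent_op_Rop (gam s : C) (j : 'I_L) :
  laurent_op 1 (fun z => Rop gam j (z + s)).
Proof.
move=> x y; have := laurentM (laurent_Rent gam s x.1 (x.2 j) y.1 (y.2 j))
  (laurent_const ([forall k, (k != j) ==> (x.2 k == y.2 k)])%:R).
by rewrite addn0 addbF.
Qed.

Lemma laurent_op_Kop (h : C) : laurent_op 1 (fun z => @Kop R L h z).
Proof.
move=> x y; rewrite /Kop; case: (eqVneq x y) => [<-|_]; last first.
  by apply: eq_laurent (@laurent0 R _ _) => z; rewrite mul0r.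
rewrite eqxx; case: (x.1 == 0).
- by apply: eq_laurent (laurent_csinhD h) => z; rewrite mul1r addrC.
- by apply: eq_laurent (laurent_csinhB h) => z; rewrite mul1r.
Qed.

Lemma laurent_op_monodromy (gam h : C) (mu : 'I_L -> C) :
  laurent_op (L + 1 + L) (fun z => monodromy gam h mu z).
Proof.
apply: laurent_opM; first apply: laurent_opM.
- by apply: laurent_op_prod => j; apply: laurent_op_Rop.
- exact: laurent_op_Kop.
- by apply: laurent_op_prod => j; apply: laurent_op_Rop.
Qed.

End LaurentOperators.

Lemma laurent_Bop (R : realType) (L : nat) (gam h : R[i]) (mu : 'I_L -> R[i])
    (s' s : qidx L) :
  laurent (2 * L).+1 true (fun z => Bop gam h mu z s' s).
Proof.
have -> : (2 * L).+1 = (L + 1 + L)%N by lia.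
exact: (laurent_op_monodromy gam h mu (0, s') (1, s)).
Qed.

Lemma laurent_oddE (R : realType) (n : nat) (f : R[i] -> R[i]) :
  laurent (2 * n).+1 true f ->
  exists2 p : {poly R[i]}, (size p <= (2 * n).+1)%N &
    forall z, f z = p.[cexp (2%:R * z)] * cexp (2%:R * z) ^- n.
Proof.
case=> p sp fE; exists p => [|z]; first by rewrite subn1 in sp.
rewrite fE mulr_natl cexpMn -exprM [_ ^+ (2 * n).+1]exprS.
by field; rewrite ?cexpX_neq0 ?cexp_neq0.
Qed.

Section FfunCons.
Variables (T : finType) (n : nat).

Definition fcons (m : T) (k : {ffun 'I_n -> T}) : {ffun 'I_n.+1 -> T} :=
  [ffun i => if unlift ord0 i is Some j then k j else m].

Lemma fcons0 m k : fcons m k ord0 = m.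
Proof. by rewrite ffunE unlift_none. Qed.

Lemma fconsS m k j : fcons m k (lift ord0 j) = k j.
Proof. by rewrite ffunE liftK. Qed.

Lemma big_fcons (V : Type) (idx : V) (op : V -> V -> V)
    (F : 'I_n.+1 -> T -> V) m k :
  \big[op/idx]_(i < n.+1) F i (fcons m k i) =
    op (F ord0 m) (\big[op/idx]_(i < n) F (lift ord0 i) (k i)).
Proof.
by rewrite big_ord_recl fcons0; congr op; apply: eq_bigr => i _; rewrite fconsS.
Qed.

Lemma sum_ffun_recl (V : nmodType) (F : {ffun 'I_n.+1 -> T} -> V) :
  \sum_k F k = \sum_(m : T) \sum_(k : {ffun 'I_n -> T}) F (fcons m k).
Proof.
rewrite pair_big (reindex (fun p : T * {ffun 'I_n -> T} => fcons p.1 p.2)) //.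
exists (fun k : {ffun 'I_n.+1 -> T} => (k ord0, [ffun j => k (lift ord0 j)])).
  move=> [m k] _ /=.
  by rewrite fcons0; congr pair; apply/ffunP => j; rewrite ffunE fconsS.
move=> k _; apply/ffunP => i; rewrite ffunE.
by case: unliftP => [j ->|->]; rewrite ?ffunE.
Qed.

End FfunCons.

Section ProductExpansion.
Variables (R : realType) (L : nat).
Local Notation C := R[i].

Lemma qprod_expand (N n : nat) (X D : 'I_n -> C) (b : 'I_n -> 'I_N -> qop R L)
    (G : 'I_n -> qop R L) :
  (forall i s t, G i s t = D i * \sum_(m < N) b i m s t * X i ^+ m) ->
  forall s t, (\big[@qmul R L/@qone R L]_(i < n) G i) s t =
    (\sum_(k : {ffun 'I_n -> 'I_N})
       (\big[@qmul R L/@qone R L]_(i < n) b i (k i)) s t * \prod_(i < n) X i ^+ k i)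
    * \prod_(i < n) D i.
Proof.
elim: n X D b G => [|n IH] X D b G GE s t.
  rewrite !big_ord0 mulr1; under eq_bigr do rewrite !big_ord0 mulr1.
  by rewrite sumr_const card_ffun !card_ord expn0 mulr1n.
rewrite big_ord_recl {1}/qmul.
under eq_bigr => w _ do rewrite GE (IH _ _ _ _ (fun i => GE (lift ord0 i))).
rewrite [\prod_(i < n.+1) D i]big_ord_recl sum_ffun_recl.
transitivity (\sum_w ((\sum_(m < N) b ord0 m s w * X ord0 ^+ m) *
  (\sum_(k : {ffun 'I_n -> 'I_N})
    (\big[@qmul R L/@qone R L]_(i < n) b (lift ord0 i) (k i)) w t *
      \prod_(i < n) X (lift ord0 i) ^+ k i))
  * (D ord0 * \prod_(i < n) D (lift ord0 i))).
  by apply: eq_bigr => w _; ring.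
rewrite -big_distrl /=; congr (_ * _).
under eq_bigr => w _ do rewrite big_distrlr.
rewrite exchange_big; apply: eq_bigr => m _.
rewrite exchange_big; apply: eq_bigr => k _.
rewrite big_fcons (big_fcons _ _ (fun i (x : 'I_N) => X i ^+ x)) /qmul big_distrl.
by apply: eq_bigr => w _ /=; ring.
Qed.

End ProductExpansion.

Theorem lemma1 (R : realType) (L : nat) (gam h : R[i]) (mu : 'I_L -> R[i]) :
  (0 < L)%N ->
  exists c : {ffun 'I_L -> 'I_(2 * L).+1} -> R[i],
    forall lam : 'I_L -> R[i],
      Zpart gam h mu lam =
        (\sum_(k : {ffun 'I_L -> 'I_(2 * L).+1})
            c k * \prod_(i < L) cexp (2%:R * lam i) ^+ k i)
        * \prod_(i < L) cexp (2%:R * lam i) ^- L.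
Proof.
move=> _. (* the result holds for [L = 0] as well *)
have /fin_all_exists2[P sizeP BE] := fun st : qidx L * qidx L =>
  laurent_oddE (laurent_Bop gam h mu st.1 st.2).
exists (fun k : {ffun 'I_L -> 'I_(2 * L).+1} =>
  (\big[@qmul R L/@qone R L]_(i < L) (fun s' s => (P (s', s))`_(k i)))
    (ketbar0 L) (ket0 L)) => lam.
apply: (qprod_expand (X := fun i => cexp (2%:R * lam i))
  (b := fun _ (m : 'I_(2 * L).+1) s' s => (P (s', s))`_m)) => i s' s.
by rewrite (BE (s', s)) mulrC (horner_coef_wide _ (sizeP _)).
Qed.
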